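(* The principal branch $W$ of Lambert's W function, restricted to $(0,\infty)$, is a complete Bernstein function.
   Context: $W$ is the principal branch of Lambert's W function: the holomorphic function on $\mathbb{C}\setminus(-\infty,-1/e]$ satisfying $W(z)e^{W(z)}=z$ with $W(z)=\sum_{n\ge1}(-n)^{n-1}z^n/n!$ near $0$. A $C^\infty$ function $g:(0,\infty)\to\mathbb{R}$ is completely monotonic if $(-1)^ng^{(n)}(z)\ge0$ for all $z>0$, $n\ge0$; $f$ is a Bernstein function if $f$ is $C^\infty$, $f(z)>0$ for $z>0$, and $f'$ is completely monotonic. A Bernstein function $f$ is complete if it has an analytic continuation to the upper half-plane $\mathbb{H}^+=\{z\in\mathbb{C}:\Im z>0\}$ with $f(\mathbb{H}^+)\subset\mathbb{H}^+$. *)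

From Stdlib Require Import Reals ClassicalEpsilon.
From Coquelicot Require Import Coquelicot.
Open Scope R_scope.

(* The principal branch of Lambert's W restricted to (0,oo): for x > 0,
   W(x) is the unique real w > 0 with w * exp w = x (the principal branch
   is real and positive on (0,oo)).  Values for x <= 0 are irrelevant. *)
Definition lambertW (x : R) : R :=
  epsilon (inhabits 0) (fun w => 0 < w /\ w * exp w = x).

Definition completely_monotonic (g : R -> R) : Prop :=
  (forall n x, 0 < x -> ex_derive_n g n x) /\
  (forall n x, 0 < x -> 0 <= (-1) ^ n * Derive_n g n x).

Definition bernstein (f : R -> R) : Prop :=
  (forall n x, 0 < x -> ex_derive_n f n x) /\
  (forall x, 0 < x -> 0 < f x) /\
  completely_monotonic (Derive f).

Definition upper_half_plane (z : C) : Prop := 0 < Im z.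

Definition complete_bernstein (f : R -> R) : Prop :=
  bernstein f /\
  exists (U : C -> Prop) (F : C -> C),
    open U /\
    (forall z, upper_half_plane z -> U z) /\
    (forall x : R, 0 < x -> U (RtoC x)) /\
    (forall z, U z -> @ex_derive C_AbsRing C_NormedModule F z) /\
    (forall x : R, 0 < x -> F (RtoC x) = RtoC (f x)) /\
    (forall z, upper_half_plane z -> upper_half_plane (F z)).

(* On (0,oo), W' = 1/(x + e^W) and
   (x + e^W)' = 1 + 1/(1 + W); since h o f is completely monotonic up to order
   n + 1 whenever h is completely monotonic and f' is so up to order n, an
   induction on the order shows that W' is completely monotonic.

   For z = r e^(i t) with 0 < t < pi, the solution w = xi + i eta of w e^w = z
   with 0 < eta < t has xi = eta cot (t - eta), and eta is the unique root of
   eta / sin (t - eta) * exp (eta cot (t - eta)) = r, a strictly increasing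
   function of eta running from 0 to +oo.  Glued to its mirror image and to the
   real W, this gives a continuous right inverse of w e^w on C \ (-oo, 0] along
   which (1 + w) e^w never vanishes, hence a holomorphic extension of W; it maps
   the upper half-plane into itself because eta > 0. *)

From Stdlib Require Import Reals Lra ClassicalEpsilon.
From Coquelicot Require Import Coquelicot.
Open Scope R_scope.

Definition wexp (w : R) : R := w * exp w.

Lemma wexp_lt a b : 0 <= a -> a < b -> wexp a < wexp b.
Proof.
  intros Ha Hab; unfold wexp.
  assert (exp a < exp b) by (apply exp_increasing; lra).
  pose proof (exp_pos a); nra.
Qed.

Lemma derivable_pt_lim_wexp w : derivable_pt_lim wexp w ((1 + w) * exp w).
Proof. apply is_derive_Reals; unfold wexp; auto_derive; auto; ring. Qed.

Lemma derivable_wexp w : derivable_pt wexp w.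
Proof. eexists; apply derivable_pt_lim_wexp. Qed.

Lemma lambertW_exists x : 0 < x -> exists w, 0 < w /\ w * exp w = x.
Proof.
  intros Hx.
  destruct (IVT (fun w => wexp w - x) 0 x) as [w [Hw Ew]].
  - intro a; apply continuity_pt_minus; [apply derivable_continuous_pt, derivable_wexp|].
    apply continuity_pt_const; intros ? ?; reflexivity.
  - exact Hx.
  - unfold wexp; rewrite exp_0; lra.
  - unfold wexp; pose proof (exp_ineq1_le x); nra.
  - exists w; unfold wexp in Ew; split; [|lra].
    destruct Hw as [[Hw|<-] _]; [exact Hw|]; rewrite Rmult_0_l in Ew; lra.
Qed.

Lemma lambertW_spec x : 0 < x -> 0 < lambertW x /\ wexp (lambertW x) = x.
Proof.
  intros Hx; apply (epsilon_spec (inhabits 0) (fun w => 0 < w /\ w * exp w = x)).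
  apply lambertW_exists, Hx.
Qed.

Lemma lambertW_pos x : 0 < x -> 0 < lambertW x.
Proof. intros Hx; apply lambertW_spec, Hx. Qed.

Lemma wexp_lambertW x : 0 < x -> wexp (lambertW x) = x.
Proof. intros Hx; apply lambertW_spec, Hx. Qed.

Lemma lambertW_ge x t : 0 < x -> 0 <= t -> wexp t <= x -> t <= lambertW x.
Proof.
  intros Hx Ht Htx; destruct (Rle_lt_dec t (lambertW x)) as [|Hlt]; [assumption|].
  pose proof (wexp_lt _ _ (Rlt_le _ _ (lambertW_pos x Hx)) Hlt) as Hw.
  rewrite wexp_lambertW in Hw by exact Hx; lra.
Qed.

Lemma lambertW_le x t : 0 < x -> 0 <= t -> x <= wexp t -> lambertW x <= t.
Proof.
  intros Hx Ht Hxt; destruct (Rle_lt_dec (lambertW x) t) as [|Hlt]; [assumption|].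
  pose proof (wexp_lt _ _ Ht Hlt) as Hw; rewrite wexp_lambertW in Hw by exact Hx; lra.
Qed.

Lemma lambertW_monotone x y : 0 < x -> x <= y -> lambertW x <= lambertW y.
Proof.
  intros Hx Hxy; pose proof (lambertW_spec x Hx) as [Hw Ew].
  apply lambertW_ge; lra.
Qed.

Lemma continuity_pt_lambertW x : 0 < x -> continuity_pt lambertW x.
Proof.
  intros Hx; pose proof (lambertW_spec x Hx) as [Hw Ew].
  set (lb := lambertW x / 2); set (ub := lambertW x + 1).
  assert (Hlb : 0 < wexp lb) by (apply Rmult_lt_0_compat; [unfold lb; lra|apply exp_pos]).
  apply (Ranalysis5.continuity_pt_recip_interv wexp lambertW lb ub); unfold lb, ub in *.
  - lra.
  - intros a b Ha Hab _; apply wexp_lt; lra.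
  - intros y Hy _; unfold comp, id; apply wexp_lambertW; lra.
  - intros y Hy1 Hy2; split; [apply lambertW_ge|apply lambertW_le]; lra.
  - intros a _; apply derivable_continuous_pt, derivable_wexp.
  - pose proof (wexp_lt (lambertW x / 2) (lambertW x) ltac:(lra) ltac:(lra)).
    pose proof (wexp_lt (lambertW x) (lambertW x + 1) ltac:(lra) ltac:(lra)).
    rewrite Ew in *; lra.
Qed.

Lemma is_derive_lambertW x : 0 < x -> is_derive lambertW x (/ (x + exp (lambertW x))).
Proof.
  intros Hx; pose proof (lambertW_spec x Hx) as [Hw Ew].
  assert (Hmono : lambertW (x / 2) <= lambertW x <= lambertW (2 * x))
    by (split; apply lambertW_monotone; lra).
  apply is_derive_Reals.
  pose proof (Ranalysis5.derivable_pt_lim_recip_interv wexp lambertW (x / 2) (2 * x) x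
    (fun a _ => derivable_wexp a) (continuity_pt_lambertW x Hx)
    ltac:(lra) ltac:(lra) Hmono) as Hd.
  rewrite (derive_pt_eq_0 _ _ _ _ (derivable_pt_lim_wexp _)) in Hd.
  replace (/ (x + exp (lambertW x))) with (1 / ((1 + lambertW x) * exp (lambertW x))).
  - apply Hd.
    + intros y Hy; unfold comp, id; apply wexp_lambertW; lra.
    + pose proof (exp_pos (lambertW x)); apply Rgt_not_eq; nra.
  - set (w := lambertW x) in *; rewrite <- Ew; unfold wexp.
    pose proof (exp_pos w); field; nra.
Qed.

Lemma ex_derive_lambertW x : 0 < x -> ex_derive lambertW x.
Proof. intros Hx; eexists; apply is_derive_lambertW, Hx. Qed.

Lemma Derive_lambertW x : 0 < x -> Derive lambertW x = / (x + exp (lambertW x)).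
Proof. intros Hx; apply is_derive_unique, is_derive_lambertW, Hx. Qed.

(** * Complete monotonicity *)

(* [cm_upto n f]: (-1)^k f^(k) >= 0 on (0,oo) for k <= n, the derivatives being
   taken one at a time through -f'. *)
Fixpoint cm_upto (n : nat) (f : R -> R) : Prop :=
  match n with
  | O => forall x, 0 < x -> 0 <= f x
  | S m => (forall x, 0 < x -> 0 <= f x) /\ (forall x, 0 < x -> ex_derive f x) /\
           cm_upto m (fun x => - Derive f x)
  end.

Definition cm (f : R -> R) : Prop := forall n, cm_upto n f.

Lemma cm_upto_nonneg n f x : cm_upto n f -> 0 < x -> 0 <= f x.
Proof. destruct n; [exact (fun H => H x)|exact (fun H => proj1 H x)]. Qed.

Lemma cm_upto_pred n f : cm_upto (S n) f -> cm_upto n f.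
Proof.
  revert f; induction n as [|n IH]; intros f [Hf [Hd HD]]; [exact Hf|].
  exact (conj Hf (conj Hd (IH _ HD))).
Qed.

Lemma cm_upto_ext n f g : (forall x, 0 < x -> f x = g x) -> cm_upto n f -> cm_upto n g.
Proof.
  revert f g; induction n as [|n IH]; intros f g E.
  - intros Hf x Hx; rewrite <- E; auto.
  - assert (El : forall x, 0 < x -> locally x (fun t => f t = g t))
      by (intros x Hx; apply (filter_imp _ _ (fun t => E t)), (open_gt 0 x Hx)).
    intros [Hf [Hd HD]]; split; [|split].
    + intros x Hx; rewrite <- E; auto.
    + intros x Hx; apply (ex_derive_ext_loc f); auto.
    + apply (IH (fun x => - Derive f x)); [|exact HD].
      intros x Hx; f_equal; apply Derive_ext_loc, El, Hx.
Qed.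

Lemma cm_upto_const n c : 0 <= c -> cm_upto n (fun _ => c).
Proof.
  revert c; induction n as [|n IH]; intros c Hc; [intros x _; exact Hc|].
  split; [|split]; [intros; exact Hc|intros; apply ex_derive_const|].
  apply (cm_upto_ext n (fun _ => 0)); [|apply IH; lra].
  intros x _; rewrite Derive_const; ring.
Qed.

Lemma cm_upto_plus n f g : cm_upto n f -> cm_upto n g -> cm_upto n (fun x => f x + g x).
Proof.
  revert f g; induction n as [|n IH]; intros f g Hf Hg.
  - intros x Hx; pose proof (Hf x Hx); pose proof (Hg x Hx); lra.
  - destruct Hf as [F0 [F1 F2]], Hg as [G0 [G1 G2]]; split; [|split].
    + intros x Hx; pose proof (F0 x Hx); pose proof (G0 x Hx); lra.
    + intros x Hx; apply (ex_derive_plus f g); auto.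
    + apply (cm_upto_ext n (fun x => - Derive f x + - Derive g x)); [|apply IH; auto].
      intros x Hx; rewrite Derive_plus; auto; ring.
Qed.

Lemma cm_upto_mult n f g : cm_upto n f -> cm_upto n g -> cm_upto n (fun x => f x * g x).
Proof.
  revert f g; induction n as [|n IH]; intros f g Hf Hg.
  - intros x Hx; apply Rmult_le_pos; auto.
  - pose proof (cm_upto_pred _ _ Hf) as Hf'; pose proof (cm_upto_pred _ _ Hg) as Hg'.
    destruct Hf as [F0 [F1 F2]], Hg as [G0 [G1 G2]]; split; [|split].
    + intros x Hx; apply Rmult_le_pos; auto.
    + intros x Hx; apply ex_derive_mult; auto.
    + apply (cm_upto_ext n (fun x => - Derive f x * g x + f x * - Derive g x)).
      * intros x Hx; rewrite Derive_mult; auto; ring.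
      * apply cm_upto_plus; apply IH; auto.
Qed.

Lemma cm_opp_derive f : cm f -> cm (fun x => - Derive f x).
Proof. intros H n; exact (proj2 (proj2 (H (S n)))). Qed.

Lemma cm_ex_derive f x : cm f -> 0 < x -> ex_derive f x.
Proof. intros H; exact (proj1 (proj2 (H 1%nat)) x). Qed.

(* -(h o f)' = (-h')(f) * f' is a product of two functions of the same kind. *)
Lemma cm_upto_comp n h f : cm h -> (forall x, 0 < x -> 0 < f x) ->
  (forall x, 0 < x -> ex_derive f x) -> cm_upto n (Derive f) ->
  cm_upto (S n) (fun x => h (f x)).
Proof.
  revert h; induction n as [|n IH]; intros h Hh Hf Hfd HDf.
  all: assert (Hd : forall x, 0 < x -> ex_derive h (f x))
         by (intros x Hx; apply cm_ex_derive, Hf, Hx; exact Hh).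
  all: split; [intros x Hx; exact (cm_upto_nonneg 0 h (f x) (Hh 0%nat) (Hf x Hx))|split];
    [intros x Hx; apply ex_derive_comp; auto|].
  - intros x Hx; simpl; rewrite (Derive_comp h f x) by auto.
    pose proof (cm_upto_nonneg 0 _ _ (cm_opp_derive h Hh 0%nat) (Hf x Hx)).
    pose proof (cm_upto_nonneg 0 _ _ HDf Hx); simpl in *; nra.
  - apply (cm_upto_ext (S n) (fun x => - Derive h (f x) * Derive f x)).
    + intros x Hx; rewrite (Derive_comp h f x) by auto; ring.
    + apply cm_upto_mult; [|exact HDf].
      apply (IH (fun t => - Derive h t)); [apply cm_opp_derive| | |apply cm_upto_pred]; auto.
Qed.

Lemma cm_upto_inv_pow n a c k : 0 <= a -> 0 <= c -> cm_upto n (fun t => c / (t + a) ^ S k).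
Proof.
  intros Ha; revert c k; induction n as [|n IH]; intros c k Hc.
  - intros x Hx; apply Rdiv_le_0_compat; [exact Hc|apply pow_lt; lra].
  - assert (Hnz : forall x, 0 < x -> (x + a) ^ k <> 0) by (intros x Hx; apply pow_nonzero; lra).
    split; [|split].
    + intros x Hx; apply Rdiv_le_0_compat; [exact Hc|apply pow_lt; lra].
    + intros x Hx; auto_derive; apply Rmult_integral_contrapositive_currified; [lra|auto].
    + apply (cm_upto_ext n (fun t => c * INR (S k) / (t + a) ^ S (S k)));
        [|apply IH, Rmult_le_pos, pos_INR; exact Hc].
      intros x Hx; rewrite (is_derive_unique _ _ (- (c * INR (S k)) / (x + a) ^ S (S k))).
      * field; apply pow_nonzero; lra.
      * auto_derive; [apply Rmult_integral_contrapositive_currified; [lra|auto]|].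
        change (match k with 0%nat => 1 | S _ => INR k + 1 end) with (INR (S k)).
        simpl pow; field; repeat split; try apply Hnz; lra.
Qed.

Lemma cm_inv_shift a : 0 <= a -> cm (fun t => / (t + a)).
Proof.
  intros Ha n; apply (cm_upto_ext n (fun t => 1 / (t + a) ^ 1)); [|apply cm_upto_inv_pow; lra].
  intros x Hx; simpl; field; lra.
Qed.

Lemma Derive_n_Derive f n x : Derive_n (Derive f) n x = Derive_n f (S n) x.
Proof. rewrite <- Nat.add_1_r; exact (Derive_n_comp f n 1 x). Qed.

Lemma cm_upto_sign n f x : cm_upto n f -> 0 < x -> 0 <= (-1) ^ n * Derive_n f n x.
Proof.
  revert f; induction n as [|n IH]; intros f Hf Hx.
  - rewrite Rmult_1_l; exact (cm_upto_nonneg 0 f x Hf Hx).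
  - pose proof (IH _ (proj2 (proj2 Hf)) Hx) as K.
    rewrite Derive_n_opp, Derive_n_Derive in K.
    simpl pow; lra.
Qed.

Lemma cm_ex_derive_n n f x : cm f -> 0 < x -> ex_derive (Derive_n f n) x.
Proof.
  revert f x; induction n as [|n IH]; intros f x Hf Hx; [exact (cm_ex_derive f x Hf Hx)|].
  apply (ex_derive_ext (fun y => - Derive_n (fun t => - Derive f t) n y)).
  - intros y; rewrite Derive_n_opp, Derive_n_Derive; apply Ropp_involutive.
  - apply (ex_derive_opp (V := R_NormedModule) (Derive_n (fun t => - Derive f t) n)).
    apply IH, Hx; apply cm_opp_derive, Hf.
Qed.

Lemma is_derive_lambertW_denominator x : 0 < x ->
  is_derive (fun y => y + exp (lambertW y)) x (1 + / (lambertW x + 1)).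
Proof.
  intros Hx; pose proof (lambertW_spec x Hx) as [Hw Ew].
  evar (l : R); replace (1 + / (lambertW x + 1)) with l; subst l.
  - apply (is_derive_plus (fun y => y) (fun y => exp (lambertW y))); [apply is_derive_id|].
    apply (is_derive_comp exp lambertW); [apply is_derive_Reals, derivable_pt_lim_exp|].
    apply is_derive_lambertW, Hx.
  - set (w := lambertW x) in *; rewrite <- Ew; unfold wexp, one, plus, scal; simpl.
    unfold mult; simpl; pose proof (exp_pos w); field; nra.
Qed.

(* W' = 1/(x + e^W) where (x + e^W)' = 1 + 1/(W + 1): complete monotonicity of W'
   up to order n gives that of 1/(W + 1), hence of (x + e^W)', up to order n + 1,
   and so that of W' up to order n + 1. *)
Lemma cm_derive_lambertW : cm (Derive lambertW).
Proof.
  intro n; induction n as [|n IH].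
  - intros x Hx; rewrite Derive_lambertW by exact Hx.
    pose proof (exp_pos (lambertW x)); apply Rlt_le, Rinv_0_lt_compat; lra.
  - assert (Hinv : cm_upto (S n) (fun x => / (lambertW x + 1)))
      by (apply (cm_upto_comp n (fun t => / (t + 1)) lambertW);
            [apply cm_inv_shift; lra|exact lambertW_pos|exact ex_derive_lambertW|exact IH]).
    assert (Hden : cm_upto (S n) (Derive (fun y => y + exp (lambertW y)))).
    { apply (cm_upto_ext _ (fun x => 1 + / (lambertW x + 1))).
      - intros x Hx; symmetry; apply is_derive_unique, is_derive_lambertW_denominator, Hx.
      - apply (cm_upto_plus _ (fun _ => 1)); [apply cm_upto_const; lra|exact Hinv]. }
    apply cm_upto_pred, (cm_upto_ext _ (fun x => / (x + exp (lambertW x) + 0))).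
    + intros x Hx; rewrite Rplus_0_r; symmetry; apply Derive_lambertW, Hx.
    + apply (cm_upto_comp (S n) (fun t => / (t + 0)) (fun x => x + exp (lambertW x)));
        [apply cm_inv_shift; lra| | |exact Hden].
      * intros x Hx; pose proof (exp_pos (lambertW x)); lra.
      * intros x Hx; eexists; apply is_derive_lambertW_denominator, Hx.
Qed.

Lemma bernstein_lambertW : bernstein lambertW.
Proof.
  pose proof cm_derive_lambertW as Hcm.
  split; [|split; [exact lambertW_pos|split]].
  - intros [|[|n]] x Hx; [exact I|exact (ex_derive_lambertW x Hx)|].
    apply (ex_derive_ext (Derive_n (Derive lambertW) n)); [intros; apply Derive_n_Derive|].
    apply cm_ex_derive_n; assumption.
  - intros n x Hx; destruct n; [exact I|]; apply cm_ex_derive_n; assumption.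
  - intros n x Hx; apply cm_upto_sign; [apply Hcm|exact Hx].
Qed.

Local Notation is_derive_C := (@is_derive C_AbsRing C_NormedModule).

Local Notation ex_derive_C := (@ex_derive C_AbsRing C_NormedModule).

Lemma locally_C_Cmod (z0 : C) (P : C -> Prop) :
  locally z0 P <-> exists del, 0 < del /\ forall z, Cmod (z - z0) < del -> P z.
Proof.
  rewrite locally_C; split.
  - intros [del H]; exists del; split; [apply cond_pos|exact H].
  - intros [del [Hdel H]]; exists (mkposreal del Hdel); exact H.
Qed.

Lemma continuous_C_iff (F : C -> C) z0 :
  continuous F z0 <-> forall e, 0 < e -> locally z0 (fun z => Cmod (F z - F z0) < e).
Proof.
  split.
  - intros HF e He; apply (HF (fun w => Cmod (w - F z0) < e)), locally_C_Cmod.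
    exists e; split; [exact He|]; intros w Hw; exact Hw.
  - intros H P HP; apply locally_C_Cmod in HP; destruct HP as [e [He HP]].
    unfold filtermap; generalize (H e He); apply filter_imp; exact (fun z Hz => HP _ Hz).
Qed.

Lemma is_derive_C_iff (F : C -> C) z l : is_derive_C F z l <->
  forall e, 0 < e -> exists del, 0 < del /\ forall y, Cmod (y - z) < del ->
    Cmod (F y - F z - (y - z) * l) <= e * Cmod (y - z).
Proof.
  split.
  - intros [_ H] e He.
    destruct (H z (fun P HP => HP) (mkposreal e He)) as [del Hdel].
    exists del; split; [apply cond_pos|exact Hdel].
  - intros H; split; [apply is_linear_scal_l|].
    intros x Hx eps.
    assert (z = x) by exact (is_filter_lim_locally_unique _ _ Hx); subst x.
    destruct (H eps (cond_pos eps)) as [del [Hdel Hy]].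
    exists (mkposreal del Hdel); exact Hy.
Qed.

(* For u = F y - F z0, v = y - z0 = G (F y) - G (F z0) and d = G'(F z0), read
   X = |v - d u|, U = |u|, V = |v|, D = |d|: then |u - v/d| = X/D <= eps V. *)
Lemma inverse_linear_bound U V D X eta eps : 0 < D -> 0 <= U -> 0 < eps ->
  X <= eta * U -> eta <= D / 2 -> eta <= eps * D * D / 2 -> D * U <= V + X -> X / D <= eps * V.
Proof.
  intros HD HU He HX H1 H2 HUV.
  assert (HU2 : D * U <= 2 * V) by nra.
  apply (Rmult_le_reg_l D); [exact HD|]; field_simplify; [|lra].
  apply (Rle_trans _ (eps * D * D / 2 * U)); [nra|].
  assert (0 <= eps * D) by nra; nra.
Qed.

Lemma is_derive_inverse_C (F G : C -> C) (z0 d : C) :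
  d <> 0%C -> is_derive_C G (F z0) d -> continuous F z0 ->
  locally z0 (fun z => G (F z) = z) -> is_derive_C F z0 (/ d)%C.
Proof.
  intros Hd HG HF Hinv; apply is_derive_C_iff; intros eps Heps.
  pose proof (proj1 (is_derive_C_iff G (F z0) d) HG) as HGe.
  assert (HD : 0 < Cmod d) by (apply Cmod_gt_0, Hd).
  set (eta := Rmin (Cmod d / 2) (eps * Cmod d * Cmod d / 2)).
  assert (Heta : 0 < eta) by (apply Rmin_pos; [lra|]; apply Rdiv_lt_0_compat; [|lra];
                               repeat apply Rmult_lt_0_compat; lra).
  destruct (HGe eta Heta) as [d1 [Hd1 HG1]].
  destruct (proj1 (locally_C_Cmod _ _) (proj1 (continuous_C_iff F z0) HF d1 Hd1)) as [d2 [Hd2 HF2]].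
  apply locally_C_Cmod in Hinv; destruct Hinv as [d3 [Hd3 Hinv]].
  exists (Rmin d2 d3); split; [apply Rmin_pos; assumption|]; intros y Hy.
  pose proof (Rmin_l d2 d3); pose proof (Rmin_r d2 d3).
  specialize (HG1 (F y) ltac:(apply HF2; lra)).
  rewrite (Hinv y), (Hinv z0) in HG1
    by (try (replace (z0 - z0)%C with (RtoC 0) by ring; rewrite Cmod_0); lra).
  set (u := (F y - F z0)%C) in *; set (v := (y - z0)%C) in *.
  assert (Hvu : Cmod (v - d * u) <= eta * Cmod u)
    by (replace (v - d * u)%C with (v - u * d)%C by ring; exact HG1).
  replace (u - v * / d)%C with (- (v - d * u) * / d)%C by (unfold u, v; field; exact Hd).
  rewrite Cmod_mult, Cmod_opp, Cmod_inv by exact Hd.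
  apply (inverse_linear_bound (Cmod u) _ _ _ eta); try apply Cmod_ge_0; auto;
    [apply Rmin_l|apply Rmin_r|].
  rewrite <- Cmod_mult, <- (Cmod_opp (v - d * u)).
  eapply Rle_trans; [|apply Cmod_triangle]; right; f_equal; ring.
Qed.

Lemma Cmod_le_abs_sum z : Cmod z <= Rabs (fst z) + Rabs (snd z).
Proof.
  destruct z as [x y]; simpl.
  replace (x, y) with (RtoC x + RtoC y * Ci)%C
    by (unfold RtoC, Ci, Cplus, Cmult; simpl; f_equal; ring).
  eapply Rle_trans; [apply Cmod_triangle|].
  rewrite Cmod_mult, Cmod_Ci, !Cmod_R, Rmult_1_r; lra.
Qed.

Lemma Re_lt_Cmod z : 0 < snd z -> Rabs (fst z) < Cmod z.
Proof.
  intros Hy; apply (Rsqr_incrst_0 _ _ ); [|apply Rabs_pos|apply Cmod_ge_0].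
  rewrite <- Rsqr_abs; unfold Rsqr; pose proof (Cmod2_alt z) as E.
  change (Re z) with (fst z) in E; change (Im z) with (snd z) in E.
  assert (0 < snd z * snd z) by nra; nra.
Qed.

Lemma Cmod_pos_Im z : 0 < snd z -> 0 < Cmod z.
Proof. intros Hy; pose proof (Re_lt_Cmod z Hy); pose proof (Rabs_pos (fst z)); lra. Qed.

Lemma continuous_Re (z : C) : continuous (fun y : C => fst y) z.
Proof. destruct z; apply continuous_fst. Qed.

Lemma continuous_Im (z : C) : continuous (fun y : C => snd y) z.
Proof. destruct z; apply continuous_snd. Qed.

Lemma continuous_Cmod (z : C) : continuous Cmod z.
Proof.
  apply filterlim_locally; intros e; apply locally_C_Cmod.
  exists e; split; [apply cond_pos|]; intros y Hy.
  apply (Rle_lt_trans _ (Cmod (y - z))); [|exact Hy].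
  change (Rabs (Cmod y - Cmod z) <= Cmod (y - z)).
  apply Rabs_le; pose proof (Cmod_triangle (y - z) z); pose proof (Cmod_triangle (z - y) y).
  replace (y - z + z)%C with y in * by ring; replace (z - y + y)%C with z in * by ring.
  replace (z - y)%C with (- (y - z))%C in * by ring; rewrite Cmod_opp in *; lra.
Qed.

Lemma continuous_comp_pt (f : C -> R) (g : R -> R) z :
  continuous f z -> continuity_pt g (f z) -> continuous (fun y => g (f y)) z.
Proof. intros Hf Hg; apply continuous_comp; [exact Hf|apply continuity_pt_filterlim, Hg]. Qed.

Lemma continuous_C_R_mult (f g : C -> R) z :
  continuous f z -> continuous g z -> continuous (fun y => f y * g y) z.
Proof. apply (continuous_mult (K := R_AbsRing)). Qed.

Lemma continuous_C_R_minus (f g : C -> R) z :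
  continuous f z -> continuous g z -> continuous (fun y => f y - g y) z.
Proof. apply (continuous_minus (V := R_NormedModule)). Qed.

Lemma continuous_near (f : C -> R) z : continuous f z ->
  forall e, 0 < e -> locally z (fun y => Rabs (f y - f z) < e).
Proof. intros Hf e He; exact (proj1 (filterlim_locally f (f z)) Hf (mkposreal e He)). Qed.

Lemma continuous_lt (f : C -> R) z c : continuous f z -> f z < c -> locally z (fun y => f y < c).
Proof.
  intros Hf Hc; generalize (continuous_near f z Hf (c - f z) ltac:(lra)); apply filter_imp.
  intros y Hy; apply Rabs_lt_between in Hy; lra.
Qed.

Lemma continuous_gt (f : C -> R) z c : continuous f z -> c < f z -> locally z (fun y => c < f y).
Proof.
  intros Hf Hc; generalize (continuous_near f z Hf (f z - c) ltac:(lra)); apply filter_imp.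
  intros y Hy; apply Rabs_lt_between in Hy; lra.
Qed.

Lemma continuous_C_pair (f g : C -> R) z :
  continuous f z -> continuous g z -> continuous (fun y => (f y, g y) : C) z.
Proof.
  intros Hf Hg P HP; apply locally_C_Cmod in HP; destruct HP as [e [He HP]].
  pose proof (continuous_near f z Hf (e / 2) ltac:(lra)) as Hf2.
  pose proof (continuous_near g z Hg (e / 2) ltac:(lra)) as Hg2.
  unfold filtermap; generalize (filter_and _ _ Hf2 Hg2); apply filter_imp.
  intros y [Hy1 Hy2]; apply HP.
  eapply Rle_lt_trans; [apply Cmod_le_abs_sum|]; simpl; unfold Rminus in *; lra.
Qed.

Lemma continuous_Cconj z : continuous Cconj z.
Proof.
  apply (continuous_C_pair (fun y => fst y) (fun y => - snd y)); [apply continuous_Re|].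
  apply (continuous_comp_pt (fun y => snd y) Ropp); [apply continuous_Im|].
  apply continuity_pt_opp, continuity_pt_id.
Qed.

Lemma Cconj_RtoC a : Cconj (RtoC a) = RtoC a.
Proof. unfold Cconj, RtoC; simpl; f_equal; ring. Qed.

Lemma exp_taylor1 a : Rabs a <= 1 / 2 -> 0 <= exp a - 1 - a <= 2 * a ^ 2.
Proof.
  intros Ha; apply Rabs_le_between in Ha.
  pose proof (exp_ineq1_le a); pose proof (exp_ineq1_le (- a)).
  assert (E : exp a * exp (- a) = 1) by (rewrite <- exp_plus, Rplus_opp_r; apply exp_0).
  split; [lra|nra].
Qed.

Lemma cos_taylor1 b : Rabs b <= 1 / 2 -> Rabs (cos b - 1) <= b ^ 2 / 2.
Proof.
  intros Hb; apply Rabs_le_between in Hb; pose proof PI2_1.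
  destruct (cos_bound b 0) as [Hc _]; [lra|lra|].
  unfold cos_approx, cos_term in Hc; simpl in Hc.
  pose proof (COS_bound b); rewrite Rabs_left1; lra.
Qed.

Lemma sin_taylor1 b : Rabs b <= 1 / 2 -> Rabs (sin b - b) <= b ^ 2 / 12.
Proof.
  assert (Hpos : forall b, 0 <= b <= 1 / 2 -> Rabs (sin b - b) <= b ^ 2 / 12).
  { intros c Hc; pose proof PI2_1.
    destruct (sin_bound c 0) as [Hs _]; [lra|lra|].
    unfold sin_approx, sin_term in Hs; simpl in Hs.
    assert (sin c <= c)
      by (destruct (Req_dec c 0) as [->|]; [rewrite sin_0; lra|left; apply sin_lt_x; lra]).
    rewrite Rabs_left1; nra. }
  intros Hb; apply Rabs_le_between in Hb; destruct (Rle_dec 0 b).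
  - apply Hpos; lra.
  - replace (sin b - b) with (- (sin (- b) - - b)) by (rewrite sin_neg; ring).
    rewrite Rabs_Ropp; replace (b ^ 2) with ((- b) ^ 2) by ring; apply Hpos; lra.
Qed.

Definition Cexp (w : C) : C := (exp (fst w) * cos (snd w), exp (fst w) * sin (snd w)).

Lemma Cexp_add a b : Cexp (a + b) = (Cexp a * Cexp b)%C.
Proof.
  destruct a as [a1 a2], b as [b1 b2]; unfold Cexp, Cmult, Cplus; simpl.
  rewrite exp_plus, cos_plus, sin_plus; f_equal; ring.
Qed.

Lemma Cmod_Cexp w : Cmod (Cexp w) = exp (fst w).
Proof.
  unfold Cmod, Cexp; simpl; pose proof (exp_pos (fst w)).
  pose proof (sin2_cos2 (snd w)) as E; unfold Rsqr in E.
  match goal with |- sqrt ?X = _ => replace X with (exp (fst w) * exp (fst w)) end.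
  - apply sqrt_square; lra.
  - set (u := exp (fst w)) in *; set (s := sin (snd w)) in *; set (c := cos (snd w)) in *.
    transitivity (u * u * (s * s + c * c)); [rewrite E|]; ring.
Qed.

Lemma Cexp_conj w : Cexp (Cconj w) = Cconj (Cexp w).
Proof. destruct w; unfold Cexp, Cconj; simpl; rewrite cos_neg, sin_neg; f_equal; ring. Qed.

Lemma Cexp_RtoC a : Cexp (RtoC a) = RtoC (exp a).
Proof. unfold Cexp, RtoC; simpl; rewrite cos_0, sin_0; f_equal; ring. Qed.

Lemma Cexp_taylor1 h : Cmod h <= 1 / 2 -> Cmod (Cexp h - 1 - h) <= 8 * Cmod h ^ 2.
Proof.
  intros Hh; pose proof (Rmax_Cmod h) as Hm; destruct h as [a b]; simpl in Hm.
  set (m := Cmod (a, b)) in *.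
  pose proof (Rmax_l (Rabs a) (Rabs b)); pose proof (Rmax_r (Rabs a) (Rabs b)).
  pose proof (exp_taylor1 a ltac:(lra)) as Ea; pose proof (exp_pos a).
  pose proof (cos_taylor1 b ltac:(lra)) as Cb; pose proof (sin_taylor1 b ltac:(lra)) as Sb.
  pose proof (Rabs_pos a); pose proof (Rabs_pos b).
  assert (Hab : a ^ 2 <= m ^ 2 /\ b ^ 2 <= m ^ 2 /\ Rabs a * Rabs b <= m ^ 2).
  { rewrite <- (pow2_abs a), <- (pow2_abs b); repeat split; nra. }
  assert (Hea : Rabs (exp a - 1) <= 2 * Rabs a).
  { apply Rabs_le; destruct (Rle_dec 0 a);
      [rewrite (Rabs_pos_eq a) in * by lra|rewrite (Rabs_left a) in * by lra]; split; nra. }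
  assert (Hsb : Rabs (sin b) <= 2 * Rabs b).
  { replace (sin b) with ((sin b - b) + b) by ring; eapply Rle_trans; [apply Rabs_triang|].
    rewrite <- (pow2_abs b) in Sb; nra. }
  eapply Rle_trans; [apply Cmod_le_abs_sum|]; simpl.
  match goal with |- Rabs ?X + Rabs ?Y <= _ =>
    replace X with ((exp a - 1 - a) + exp a * (cos b - 1)) by ring;
    replace Y with ((exp a - 1) * sin b + (sin b - b)) by ring end.
  pose proof (Rabs_triang (exp a - 1 - a) (exp a * (cos b - 1))).
  pose proof (Rabs_triang ((exp a - 1) * sin b) (sin b - b)).
  rewrite Rabs_mult, (Rabs_pos_eq (exp a)) in * by lra.
  rewrite (Rabs_pos_eq (exp a - 1 - a)) in * by lra.
  assert (Rabs (exp a - 1) * Rabs (sin b) <= 4 * (Rabs a * Rabs b))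
    by (pose proof (Rabs_pos (exp a - 1)); pose proof (Rabs_pos (sin b)); nra).
  assert (exp a <= 2) by (pose proof (Rle_abs a); rewrite <- (pow2_abs a) in Ea; nra).
  assert (exp a * Rabs (cos b - 1) <= b ^ 2) by (pose proof (Rabs_pos (cos b - 1)); nra).
  lra.
Qed.

Definition Cwexp (w : C) : C := (w * Cexp w)%C.

Lemma is_derive_Cwexp w : is_derive_C Cwexp w ((1 + w) * Cexp w)%C.
Proof.
  apply is_derive_C_iff; intros e He.
  set (K := Cmod (Cexp w) * (8 * (Cmod w + 1) + 1)).
  assert (HK : 0 < K) by (unfold K; rewrite Cmod_Cexp; pose proof (exp_pos (fst w));
                          pose proof (Cmod_ge_0 w); apply Rmult_lt_0_compat; lra).
  exists (Rmin (1 / 2) (e / K)); split; [apply Rmin_pos; [lra|apply Rdiv_lt_0_compat; lra]|].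
  intros y Hy; pose proof (Rmin_l (1 / 2) (e / K)); pose proof (Rmin_r (1 / 2) (e / K)).
  set (h := (y - w)%C) in *; set (m := Cmod h) in *.
  replace (Cwexp y - Cwexp w - h * ((1 + w) * Cexp w))%C
    with (Cexp w * ((w + h) * (Cexp h - 1 - h) + h * h))%C
    by (unfold Cwexp; replace y with (w + h)%C by (unfold h; ring); rewrite Cexp_add; ring).
  assert (Hh : Cmod ((w + h) * (Cexp h - 1 - h) + h * h) <= (8 * (Cmod w + 1) + 1) * m * m).
  { eapply Rle_trans; [apply Cmod_triangle|]; rewrite !Cmod_mult.
    pose proof (Cexp_taylor1 h ltac:(fold m; lra)) as Ht; fold m in Ht.
    pose proof (Cmod_triangle w h) as Hwh; fold m in Hwh.
    assert (Cmod (w + h) * Cmod (Cexp h - 1 - h) <= (Cmod w + 1) * (8 * m ^ 2))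
      by (apply Rmult_le_compat; try apply Cmod_ge_0; lra).
    fold m; nra. }
  assert (Hm : K * m <= e)
    by (apply (Rmult_le_reg_r (/ K)); [apply Rinv_0_lt_compat; lra|];
        replace (K * m * / K) with m by (field; lra); unfold Rdiv in *; lra).
  rewrite Cmod_mult; pose proof (Cmod_ge_0 (Cexp w)); pose proof (Cmod_ge_0 h) as Hm0.
  fold m in Hm0 |- *; unfold K in Hm; nra.
Qed.

Lemma Cmod_Cwexp w : Cmod (Cwexp w) = Cmod w * exp (fst w).
Proof. unfold Cwexp; rewrite Cmod_mult, Cmod_Cexp; reflexivity. Qed.

Lemma Cwexp_conj w : Cwexp (Cconj w) = Cconj (Cwexp w).
Proof. unfold Cwexp; rewrite Cexp_conj, Cmult_conj; reflexivity. Qed.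

Lemma Cwexp_RtoC a : Cwexp (RtoC a) = RtoC (wexp a).
Proof. unfold Cwexp, wexp; rewrite Cexp_RtoC; unfold RtoC, Cmult; simpl; f_equal; ring. Qed.

(** * Inverting w e^w on the upper half-plane *)

(* If w = (e cot (t - e), e) then w = e / sin (t - e) * exp (i (t - e)), so
   w e^w has argument t and modulus [kmod t e]. *)
Definition kmod (t e : R) : R := e / sin (t - e) * exp (e * cos (t - e) / sin (t - e)).

Definition kmod_derive (t e : R) : R := exp (e * cos (t - e) / sin (t - e)) *
  (sin (t - e) ^ 2 + 2 * e * sin (t - e) * cos (t - e) + e ^ 2) / sin (t - e) ^ 3.

Lemma is_derive_kmod t e : sin (t - e) <> 0 -> is_derive (kmod t) e (kmod_derive t e).
Proof.
  intros Hs; unfold kmod, kmod_derive; auto_derive; replace (t + - e) with (t - e) by ring;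
    [tauto|].
  pose proof (sin2_cos2 (t - e)) as E; unfold Rsqr in E.
  replace (e ^ 2) with (e ^ 2 * (sin (t - e) * sin (t - e) + cos (t - e) * cos (t - e)))
    by (rewrite E; ring).
  unfold Rdiv; field; exact Hs.
Qed.

Lemma kmod_increasing t a b : t <= PI -> 0 < a -> a < b -> b < t -> kmod t a < kmod t b.
Proof.
  intros Ht Ha Hab Hb.
  assert (Hs : forall e, a <= e <= b -> 0 < sin (t - e)) by (intros e He; apply sin_gt_0; lra).
  destruct (MVT_cor2 (kmod t) (kmod_derive t) a b Hab) as [c [Hcd Hc]].
  - intros c Hc; apply is_derive_Reals, is_derive_kmod, Rgt_not_eq, Hs, Hc.
  - enough (0 < kmod_derive t c) by nra.
    pose proof (Hs c ltac:(lra)) as Hsc; pose proof (sin2_cos2 (t - c)) as E; unfold Rsqr in E.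
    unfold kmod_derive; apply Rdiv_lt_0_compat; [|apply pow_lt, Hsc].
    apply Rmult_lt_0_compat; [apply exp_pos|].
    pose proof (pow2_ge_0 (sin (t - c) + c * cos (t - c))).
    assert (0 < (c * sin (t - c)) ^ 2) by (apply pow_lt, Rmult_lt_0_compat; lra).
    nra.
Qed.

Lemma kmod_le t a b : t <= PI -> 0 < a -> a <= b -> b < t -> kmod t a <= kmod t b.
Proof. intros Ht Ha [Hab|<-] Hb; [left; apply kmod_increasing|right]; auto. Qed.

Lemma continuity_pt_kmod t e : 0 < t - e < PI -> continuity_pt (kmod t) e.
Proof.
  intros H; apply derivable_continuous_pt; eexists; apply is_derive_Reals, is_derive_kmod.
  apply Rgt_not_eq, sin_gt_0; lra.
Qed.

Lemma continuity_pt_kmod_arg t e : 0 < t - e < PI -> continuity_pt (fun s => kmod s e) t.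
Proof.
  intros H; apply derivable_continuous_pt; eexists; apply is_derive_Reals; unfold kmod.
  auto_derive; replace (t + - e) with (t - e) by ring.
  assert (sin (t - e) <> 0) by (apply Rgt_not_eq, sin_gt_0; lra); tauto.
  reflexivity.
Qed.

Lemma kmod_small t r : 0 < t < PI -> 0 < r -> exists e, 0 < e < t / 2 /\ kmod t e < r.
Proof.
  intros Ht Hr; assert (Hk0 : kmod t 0 = 0) by (unfold kmod, Rdiv; ring).
  destruct (continuity_pt_kmod t 0 ltac:(lra) r Hr) as [d [Hd Hk]].
  set (e := Rmin (d / 2) (t / 4)).
  assert (He : 0 < e <= t / 4 /\ e < d)
    by (unfold e; pose proof (Rmin_l (d / 2) (t / 4)); pose proof (Rmin_r (d / 2) (t / 4));
        pose proof (Rmin_pos (d / 2) (t / 4)); lra).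
  exists e; split; [lra|].
  assert (Hdist : R_dist (kmod t e) (kmod t 0) < r).
  { apply Hk; split; [split; [exact I|lra]|].
    simpl; unfold R_dist; rewrite Rminus_0_r, Rabs_pos_eq; lra. }
  unfold R_dist in Hdist; rewrite Hk0, Rminus_0_r in Hdist.
  pose proof (Rle_abs (kmod t e)); lra.
Qed.

(* Near e = t the factor e / sin (t - e) blows up while the exponential stays >= 1. *)
Lemma kmod_large t r : 0 < t < PI -> 0 < r -> exists e, t / 2 <= e < t /\ r < kmod t e.
Proof.
  intros Ht Hr; set (d := Rmin (t / 2) (t / (2 * (r + 1)))).
  assert (Hd : 0 < d) by (apply Rmin_pos; apply Rdiv_lt_0_compat; lra).
  pose proof (Rmin_l (t / 2) (t / (2 * (r + 1)))) as Hd1.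
  pose proof (Rmin_r (t / 2) (t / (2 * (r + 1)))) as Hd2; fold d in Hd1, Hd2.
  exists (t - d); split; [lra|]; unfold kmod; replace (t - (t - d)) with d by ring.
  assert (Hs : 0 < sin d) by (apply sin_gt_0; lra).
  assert (sin d <= d) by (left; apply sin_lt_x, Hd).
  assert (1 <= exp ((t - d) * cos d / sin d)).
  { assert (0 <= (t - d) * cos d / sin d).
    { apply Rdiv_le_0_compat; [|exact Hs].
      apply Rmult_le_pos; [lra|]; left; apply cos_gt_0; pose proof PI_RGT_0; lra. }
    pose proof (exp_ineq1_le ((t - d) * cos d / sin d)); lra. }
  assert (r + 1 <= (t - d) / sin d).
  { apply (Rmult_le_reg_r (sin d)); [exact Hs|].
    unfold Rdiv; rewrite Rmult_assoc, Rinv_l, Rmult_1_r by lra.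
    assert ((r + 1) * d <= t / 2).
    { apply (Rle_trans _ ((r + 1) * (t / (2 * (r + 1))))); [apply Rmult_le_compat_l; lra|].
      right; field; lra. }
    nra. }
  nra.
Qed.

Lemma kmod_surjective t r : 0 < t < PI -> 0 < r -> exists e, 0 < e < t /\ kmod t e = r.
Proof.
  intros Ht Hr.
  destruct (kmod_small t r Ht Hr) as [e1 [He1 Hk1]], (kmod_large t r Ht Hr) as [e2 [He2 Hk2]].
  destruct (Ranalysis5.IVT_interv (fun e => kmod t e - r) e1 e2) as [e [He Hke]]; try lra.
  - intros a Ha; apply continuity_pt_minus; [apply continuity_pt_kmod; lra|].
    apply continuity_pt_const; intros ? ?; reflexivity.
  - exists e; split; lra.
Qed.

Lemma Re_div_Cmod_bound z : 0 < snd z -> -1 < fst z / Cmod z < 1.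
Proof.
  intros Hy; pose proof (Re_lt_Cmod z Hy) as H; pose proof (Cmod_pos_Im z Hy).
  apply Rabs_lt_between in H; split;
    [apply (Rmult_lt_reg_r (Cmod z))|apply (Rmult_lt_reg_l (Cmod z))]; try lra;
    unfold Rdiv; [rewrite Rmult_assoc, Rinv_l|rewrite Rmult_comm, Rmult_assoc, Rinv_l]; lra.
Qed.

Definition carg (z : C) : R := acos (fst z / Cmod z).

Lemma carg_bounds z : 0 < snd z -> 0 < carg z < PI.
Proof. intros Hy; apply acos_bound_lt, Re_div_Cmod_bound, Hy. Qed.

Lemma cos_carg z : 0 < snd z -> cos (carg z) = fst z / Cmod z.
Proof. intros Hy; apply cos_acos; pose proof (Re_div_Cmod_bound z Hy); lra. Qed.

Lemma sin_carg z : 0 < snd z -> sin (carg z) = snd z / Cmod z.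
Proof.
  intros Hy; pose proof (Re_div_Cmod_bound z Hy); pose proof (Cmod_pos_Im z Hy).
  unfold carg; rewrite sin_acos by lra.
  rewrite <- (sqrt_pow2 (snd z / Cmod z)) by (apply Rlt_le, Rdiv_lt_0_compat; assumption).
  pose proof (Cmod2_alt z) as E; change (Re z) with (fst z) in E; change (Im z) with (snd z) in E.
  assert (Ey : snd z ^ 2 = Cmod z ^ 2 - fst z ^ 2) by lra.
  f_equal; replace ((snd z / Cmod z) ^ 2) with (snd z ^ 2 / Cmod z ^ 2) by (field; lra).
  rewrite Ey; unfold Rsqr; field; lra.
Qed.

Lemma continuous_carg z : 0 < snd z -> continuous carg z.
Proof.
  intros Hy; pose proof (Re_div_Cmod_bound z Hy); pose proof (Cmod_pos_Im z Hy).
  apply (continuous_comp_pt (fun y => fst y * / Cmod y) acos);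
    [|apply derivable_continuous_pt, derivable_pt_acos; assumption].
  apply continuous_C_R_mult; [apply continuous_Re|].
  apply (continuous_comp_pt Cmod Rinv); [apply continuous_Cmod|].
  apply continuity_pt_inv; [apply continuity_pt_id|lra].
Qed.

(* For Im z > 0, Wup z = (e cot (t - e), e) with t = arg z and e the root of
   kmod t e = |z|; by the remark on [kmod] it solves w e^w = z. *)
Definition Wup_im (z : C) : R :=
  epsilon (inhabits 0) (fun e => 0 < e < carg z /\ kmod (carg z) e = Cmod z).

Definition Wup_re (z : C) : R := Wup_im z * cos (carg z - Wup_im z) / sin (carg z - Wup_im z).

Definition Wup (z : C) : C := (Wup_re z, Wup_im z).

Lemma Wup_im_spec z : 0 < snd z -> 0 < Wup_im z < carg z /\ kmod (carg z) (Wup_im z) = Cmod z.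
Proof.
  intros Hy.
  apply (epsilon_spec (inhabits 0) (fun e => 0 < e < carg z /\ kmod (carg z) e = Cmod z)).
  apply kmod_surjective; [apply carg_bounds|apply Cmod_pos_Im]; exact Hy.
Qed.

Lemma Cwexp_Wup z : 0 < snd z -> Cwexp (Wup z) = z.
Proof.
  intros Hy; destruct (Wup_im_spec z Hy) as [He Hk]; pose proof (carg_bounds z Hy).
  pose proof (cos_carg z Hy) as Ec; pose proof (sin_carg z Hy) as Es; pose proof (Cmod_pos_Im z Hy).
  unfold Cwexp, Wup, Wup_re, Cexp, Cmult; simpl.
  set (t := carg z) in *; set (e := Wup_im z) in *; unfold kmod in Hk.
  assert (Hs : 0 < sin (t - e)) by (apply sin_gt_0; lra).
  replace t with ((t - e) + e) in Ec, Es by ring; rewrite cos_plus in Ec; rewrite sin_plus in Es.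
  assert (Ex : fst z = Cmod z * (cos (t - e) * cos e - sin (t - e) * sin e))
    by (rewrite Ec; field; lra).
  assert (Ey : snd z = Cmod z * (sin (t - e) * cos e + cos (t - e) * sin e))
    by (rewrite Es; field; lra).
  destruct z as [x y]; simpl in Ex, Ey |- *; f_equal; [rewrite Ex|rewrite Ey];
    rewrite <- Hk; field; lra.
Qed.

Lemma Wup_im_between z a b : 0 < snd z -> 0 < a < b -> b < carg z ->
  kmod (carg z) a < Cmod z < kmod (carg z) b -> a < Wup_im z < b.
Proof.
  intros Hy Ha Hb Hk; destruct (Wup_im_spec z Hy) as [He Hke]; pose proof (carg_bounds z Hy).
  split; apply Rnot_le_lt; intros Hle.
  - pose proof (kmod_le (carg z) (Wup_im z) a ltac:(lra) ltac:(lra) Hle ltac:(lra)); lra.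
  - pose proof (kmod_le (carg z) b (Wup_im z) ltac:(lra) ltac:(lra) Hle ltac:(lra)); lra.
Qed.

Lemma continuous_Wup_im z0 : 0 < snd z0 -> continuous Wup_im z0.
Proof.
  intros Hy0; destruct (Wup_im_spec z0 Hy0) as [He0 Hk0]; pose proof (carg_bounds z0 Hy0).
  apply filterlim_locally; intros eps.
  set (t0 := carg z0) in *; set (e0 := Wup_im z0) in *.
  assert (Hd : exists d, 0 < d < eps /\ d <= e0 / 2 /\ d <= (t0 - e0) / 2).
  { pose proof (cond_pos eps).
    exists (Rmin (eps / 2) (Rmin (e0 / 2) ((t0 - e0) / 2))).
    pose proof (Rmin_l (eps / 2) (Rmin (e0 / 2) ((t0 - e0) / 2))).
    pose proof (Rmin_r (eps / 2) (Rmin (e0 / 2) ((t0 - e0) / 2))).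
    pose proof (Rmin_l (e0 / 2) ((t0 - e0) / 2)); pose proof (Rmin_r (e0 / 2) ((t0 - e0) / 2)).
    assert (0 < Rmin (eps / 2) (Rmin (e0 / 2) ((t0 - e0) / 2)))
      by (apply Rmin_pos; [|apply Rmin_pos]; lra).
    repeat split; lra. }
  destruct Hd as [d Hd].
  set (a := e0 - d); set (b := e0 + d).
  assert (Hka : kmod t0 a < Cmod z0) by (rewrite <- Hk0; apply kmod_increasing; unfold a; lra).
  assert (Hkb : Cmod z0 < kmod t0 b) by (rewrite <- Hk0; apply kmod_increasing; unfold b; lra).
  assert (Hkc : forall c, 0 < t0 - c < PI -> continuous (fun y => kmod (carg y) c - Cmod y) z0).
  { intros c Hc; apply continuous_C_R_minus; [|apply continuous_Cmod].
    apply (continuous_comp_pt carg (fun s => kmod s c)); [apply continuous_carg, Hy0|].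
    apply continuity_pt_kmod_arg, Hc. }
  assert (Ha : locally z0 (fun y => kmod (carg y) a - Cmod y < 0))
    by (apply continuous_lt; [apply Hkc; unfold a|fold t0]; lra).
  assert (Hb : locally z0 (fun y => 0 < kmod (carg y) b - Cmod y))
    by (apply continuous_gt; [apply Hkc; unfold b|fold t0]; lra).
  assert (Ht : locally z0 (fun y => b < carg y))
    by (apply continuous_gt; [apply continuous_carg, Hy0|fold t0; unfold b; lra]).
  assert (Hy := continuous_gt _ _ 0 (continuous_Im z0) Hy0).
  generalize (filter_and _ _ (filter_and _ _ Ha Hb) (filter_and _ _ Ht Hy)); apply filter_imp.
  intros z [[Hza Hzb] [Hzt Hzy]].
  pose proof (Wup_im_between z a b Hzy ltac:(unfold a, b; lra) Hzt ltac:(lra)).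
  change (Rabs (Wup_im z - e0) < eps); apply Rabs_lt_between; unfold a, b in *; lra.
Qed.

Lemma continuous_Wup_re z0 : 0 < snd z0 -> continuous Wup_re z0.
Proof.
  intros Hy0; destruct (Wup_im_spec z0 Hy0) as [He0 _]; pose proof (carg_bounds z0 Hy0).
  apply (continuous_ext_loc _ (fun y => Wup_im y * (fun u => cos u / sin u) (carg y - Wup_im y))).
  - apply filter_forall; intros y; unfold Wup_re, Rdiv; symmetry; apply Rmult_assoc.
  - apply continuous_C_R_mult; [apply continuous_Wup_im, Hy0|].
    apply (continuous_comp_pt (fun y => carg y - Wup_im y) (fun u => cos u / sin u)).
    + apply continuous_C_R_minus; [apply continuous_carg|apply continuous_Wup_im]; exact Hy0.
    + apply derivable_continuous_pt; eexists; apply is_derive_Reals; auto_derive.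
      * apply Rgt_not_eq, sin_gt_0; lra.
      * reflexivity.
Qed.

Lemma continuous_Wup z : 0 < snd z -> continuous Wup z.
Proof.
  intros Hy; apply continuous_C_pair; [apply continuous_Wup_re|apply continuous_Wup_im]; exact Hy.
Qed.

(* |w e^w| = |z| and Re w <= |w| <= Re w + Im w trap W(|z|) between Re w and
   Re w + Im w; and Im w < arg z <= 3 sin (arg z) = 3 Im z / |z|. *)
Lemma Wup_near_axis z : 0 < snd z -> 0 < fst z ->
  Wup_im z < 3 * snd z / Cmod z /\ Rabs (Wup_re z - lambertW (Cmod z)) <= Wup_im z.
Proof.
  intros Hy Hx; destruct (Wup_im_spec z Hy) as [He _]; pose proof (carg_bounds z Hy).
  pose proof (cos_carg z Hy) as Ec; pose proof (sin_carg z Hy) as Es; pose proof (Cmod_pos_Im z Hy).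
  set (t := carg z) in *; set (e := Wup_im z) in *.
  assert (Ht : t < PI / 2).
  { apply Rnot_le_lt; intros Ht.
    assert (cos t <= 0) by (apply cos_le_0; pose proof PI_RGT_0; lra).
    assert (0 < fst z / Cmod z) by (apply Rdiv_lt_0_compat; lra); lra. }
  split.
  - assert (t / 3 <= sin t).
    { destruct (sin_bound t 0) as [Hs _]; [pose proof PI_RGT_0; lra|pose proof PI2_3_2; lra|].
      unfold sin_approx, sin_term in Hs; simpl in Hs; pose proof PI_4.
      assert (t * t <= 4) by nra; nra. }
    rewrite Es in *; unfold Rdiv in *; lra.
  - assert (Hxi : 0 < Wup_re z).
    { unfold Wup_re; fold t e; apply Rdiv_lt_0_compat; [apply Rmult_lt_0_compat; [lra|]|];
        [apply cos_gt_0|apply sin_gt_0]; lra. }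
    pose proof (Cmod_Cwexp (Wup z)) as Em; rewrite Cwexp_Wup in Em by exact Hy.
    unfold Wup in Em; simpl in Em; fold e in Em; set (xi := Wup_re z) in *.
    pose proof (Rmax_Cmod (xi, e)) as Hm1; pose proof (Cmod_le_abs_sum (xi, e)) as Hm2.
    simpl in Hm1, Hm2.
    rewrite !Rabs_pos_eq in Hm1, Hm2 by lra; pose proof (Rmax_l xi e).
    pose proof (exp_pos xi); pose proof (exp_ineq1_le e).
    assert (xi <= lambertW (Cmod z)) by (apply lambertW_ge; [lra|lra|unfold wexp; nra]).
    assert (lambertW (Cmod z) <= xi + e).
    { apply lambertW_le; [lra|lra|unfold wexp; rewrite exp_plus, Em].
      apply (Rle_trans _ ((xi + e) * exp xi)); [apply Rmult_le_compat_r; lra|].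
      rewrite <- Rmult_assoc, <- (Rmult_1_r ((xi + e) * exp xi)) at 1.
      apply Rmult_le_compat_l; [nra|lra]. }
    apply Rabs_le; lra.
Qed.

Lemma Wup_tends_to_lambertW x0 : 0 < x0 -> forall e, 0 < e ->
  locally (RtoC x0) (fun z => 0 < snd z -> Cmod (Wup z - RtoC (lambertW x0)) < e).
Proof.
  intros Hx0 e He.
  assert (Hmod : Cmod (RtoC x0) = x0) by (rewrite Cmod_R; apply Rabs_pos_eq; lra).
  assert (HW : locally (RtoC x0) (fun z => Rabs (lambertW (Cmod z) - lambertW x0) < e / 2)).
  { replace (lambertW x0) with (lambertW (Cmod (RtoC x0))) by (rewrite Hmod; reflexivity).
    apply continuous_near; [|lra].
    apply continuous_comp_pt; [apply continuous_Cmod|].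
    rewrite Hmod; apply continuity_pt_lambertW, Hx0. }
  assert (Hratio : locally (RtoC x0) (fun z => 3 * snd z * / Cmod z < e / 4)).
  { apply continuous_lt; [|simpl; lra].
    apply continuous_C_R_mult.
    { apply (continuous_C_R_mult (fun _ => 3)); [apply continuous_const|apply continuous_Im]. }
    apply (continuous_comp_pt Cmod Rinv); [apply continuous_Cmod|].
    apply continuity_pt_inv; [apply continuity_pt_id|rewrite Hmod; lra]. }
  assert (Hre : locally (RtoC x0) (fun z => 0 < fst z))
    by (apply continuous_gt; [apply continuous_Re|exact Hx0]).
  generalize (filter_and _ _ HW (filter_and _ _ Hratio Hre)); apply filter_imp.
  intros z [Hz1 [Hz2 Hz3]] Hy; destruct (Wup_near_axis z Hy Hz3) as [Him Hre'].
  destruct (Wup_im_spec z Hy) as [Hpos _].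
  eapply Rle_lt_trans; [apply Cmod_le_abs_sum|]; unfold Wup; simpl.
  replace (Wup_im z + - 0) with (Wup_im z) by ring; rewrite (Rabs_pos_eq (Wup_im z)) by lra.
  unfold Rdiv in Him.
  pose proof (Rabs_triang (Wup_re z - lambertW (Cmod z)) (lambertW (Cmod z) - lambertW x0)).
  replace (Wup_re z - lambertW (Cmod z) + (lambertW (Cmod z) - lambertW x0))
    with (Wup_re z + - lambertW x0) in * by ring; lra.
Qed.

(** * The principal branch on the slit plane *)

Definition slit_plane (z : C) : Prop := 0 < snd z \/ snd z < 0 \/ 0 < fst z.

Definition W_slit (z : C) : C :=
  match Rlt_dec 0 (snd z) with
  | left _ => Wup z
  | right _ =>
    match Rlt_dec (snd z) 0 with
    | left _ => Cconj (Wup (Cconj z))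
    | right _ => RtoC (lambertW (fst z))
    end
  end.

Lemma W_slit_upper z : 0 < snd z -> W_slit z = Wup z.
Proof. intros H; unfold W_slit; destruct (Rlt_dec 0 (snd z)); [reflexivity|lra]. Qed.

Lemma W_slit_lower z : snd z < 0 -> W_slit z = Cconj (Wup (Cconj z)).
Proof.
  intros H; unfold W_slit; destruct (Rlt_dec 0 (snd z)); [lra|].
  destruct (Rlt_dec (snd z) 0); [reflexivity|lra].
Qed.

Lemma W_slit_real z : snd z = 0 -> W_slit z = RtoC (lambertW (fst z)).
Proof.
  intros H; unfold W_slit; destruct (Rlt_dec 0 (snd z)); [lra|].
  destruct (Rlt_dec (snd z) 0); [lra|reflexivity].
Qed.

Lemma Cwexp_W_slit z : slit_plane z -> Cwexp (W_slit z) = z.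
Proof.
  intros Hz; destruct (Rtotal_order 0 (snd z)) as [Hy|[Hy|Hy]].
  - rewrite W_slit_upper by exact Hy; apply Cwexp_Wup, Hy.
  - destruct Hz as [|[|Hx]]; [lra|lra|].
    rewrite W_slit_real, Cwexp_RtoC, wexp_lambertW by (auto; lra).
    destruct z; simpl in *; subst; reflexivity.
  - rewrite W_slit_lower, Cwexp_conj, Cwexp_Wup, Cconj_conj by (destruct z; simpl in *; lra).
    reflexivity.
Qed.

Lemma locally_slit_plane z : slit_plane z -> locally z slit_plane.
Proof.
  intros [Hz|[Hz|Hz]]; [generalize (continuous_gt _ z 0 (continuous_Im z) Hz)
    |generalize (continuous_lt _ z 0 (continuous_Im z) Hz)
    |generalize (continuous_gt _ z 0 (continuous_Re z) Hz)];
    apply filter_imp; unfold slit_plane; tauto.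
Qed.

Lemma continuous_W_slit_real x0 : 0 < x0 -> continuous W_slit (RtoC x0).
Proof.
  intros Hx0; apply continuous_C_iff; intros e He.
  rewrite W_slit_real by reflexivity; simpl fst.
  pose proof (Wup_tends_to_lambertW x0 Hx0 e He) as Hup.
  assert (Hdown : locally (RtoC x0)
            (fun z => 0 < snd (Cconj z) -> Cmod (Wup (Cconj z) - RtoC (lambertW x0)) < e))
    by (apply (continuous_Cconj (RtoC x0)
                 (fun w => 0 < snd w -> Cmod (Wup w - RtoC (lambertW x0)) < e));
        rewrite Cconj_RtoC; exact Hup).
  assert (Haxis : locally (RtoC x0) (fun z => Rabs (lambertW (fst z) - lambertW x0) < e)).
  { apply (continuous_near (fun z => lambertW (fst z)) (RtoC x0)); [|exact He].
    apply continuous_comp_pt; [apply continuous_Re|apply continuity_pt_lambertW, Hx0]. }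
  generalize (filter_and _ _ Hup (filter_and _ _ Hdown Haxis)); apply filter_imp.
  intros z [H1 [H2 H3]]; destruct (Rtotal_order 0 (snd z)) as [Hy|[Hy|Hy]].
  - rewrite W_slit_upper by exact Hy; apply H1, Hy.
  - rewrite W_slit_real, <- RtoC_minus, Cmod_R by lra; exact H3.
  - rewrite W_slit_lower, <- (Cconj_RtoC (lambertW x0)), <- Cminus_conj, Cmod_conj by exact Hy.
    apply H2; destruct z; simpl in *; lra.
Qed.

Lemma continuous_W_slit z : slit_plane z -> continuous W_slit z.
Proof.
  intros Hz; destruct (Rtotal_order 0 (snd z)) as [Hy|[Hy|Hy]].
  - apply (continuous_ext_loc _ Wup); [|apply continuous_Wup, Hy].
    generalize (continuous_gt _ z 0 (continuous_Im z) Hy); apply filter_imp.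
    intros y Hy'; symmetry; apply W_slit_upper, Hy'.
  - destruct Hz as [|[|Hx]]; [lra|lra|].
    destruct z as [x y]; simpl in *; subst; apply continuous_W_slit_real, Hx.
  - apply (continuous_ext_loc _ (fun y => Cconj (Wup (Cconj y)))).
    + generalize (continuous_lt _ z 0 (continuous_Im z) Hy); apply filter_imp.
      intros y Hy'; symmetry; apply W_slit_lower, Hy'.
    + apply (continuous_comp Cconj (fun w => Cconj (Wup w))); [apply continuous_Cconj|].
      apply (continuous_comp Wup Cconj); [|apply continuous_Cconj].
      apply continuous_Wup; destruct z; simpl in *; lra.
Qed.

Lemma W_slit_ne_m1 z : slit_plane z -> (1 + W_slit z)%C <> 0%C.
Proof.
  intros Hz E; destruct (Rtotal_order 0 (snd z)) as [Hy|[Hy|Hy]].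
  - rewrite W_slit_upper in E by exact Hy; apply (f_equal snd) in E; simpl in E.
    destruct (Wup_im_spec z Hy); lra.
  - destruct Hz as [|[|Hx]]; [lra|lra|].
    rewrite W_slit_real in E by lra; apply (f_equal fst) in E; simpl in E.
    pose proof (lambertW_pos _ Hx); lra.
  - rewrite W_slit_lower in E by exact Hy; apply (f_equal snd) in E; simpl in E.
    destruct (Wup_im_spec (Cconj z)) as [He _]; [destruct z; simpl in *; lra|lra].
Qed.

Lemma ex_derive_W_slit z : slit_plane z -> ex_derive_C W_slit z.
Proof.
  intros Hz; eexists; apply (is_derive_inverse_C W_slit Cwexp z ((1 + W_slit z) * Cexp (W_slit z))).
  - intros E; apply (f_equal Cmod) in E; rewrite Cmod_mult, Cmod_Cexp, Cmod_0 in E.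
    apply Rmult_integral in E; destruct E as [E|E]; [|pose proof (exp_pos (fst (W_slit z))); lra].
    apply Cmod_eq_0 in E; exact (W_slit_ne_m1 z Hz E).
  - apply is_derive_Cwexp.
  - apply continuous_W_slit, Hz.
  - generalize (locally_slit_plane z Hz); apply filter_imp; exact Cwexp_W_slit.
Qed.

Theorem mainTheorem11 : complete_bernstein lambertW.
Proof.
  split; [exact bernstein_lambertW|].
  exists slit_plane, W_slit; repeat split.
  - exact locally_slit_plane.
  - intros z Hz; left; exact Hz.
  - intros x Hx; right; right; exact Hx.
  - exact ex_derive_W_slit.
  - intros x _; apply W_slit_real; reflexivity.
  - intros z Hz; unfold upper_half_plane in *; rewrite W_slit_upper by exact Hz.
    apply (Wup_im_spec z Hz).
Qed.
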